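(* Let $l\in\{1,\dots,r\}$ and let $i=i(l)$ be the unique positive integer with $0\le \sum_{j=i}^nM_j-lp<M_i$. Then the $\mathrm{id}$-leading term of $I^{[l]}(z)$ equals $$(-1)^{\sum_{j=1}^iM_j}\,\frac{\Gamma_{\mathbb{F}_p}(M_i+1)\,\Gamma_{\mathbb{F}_p}\big(\sum_{j=i+1}^nM_j-(l-1)p+1\big)}{\Gamma_{\mathbb{F}_p}\big(\sum_{j=i}^nM_j-lp+1\big)}\Big(\frac{\sum_{j=i+1}^ne_j}{\sum_{j=i+1}^nM_j}-\frac{e_i}{M_i}\Big)\,z_1^{M_1}\cdots z_{i-1}^{M_{i-1}}z_i^{\sum_{j=i}^nM_j-lp}.$$
   Context: Let $p,q$ be primes and $n$ a positive integer with $p>n\ge2$, $p>q$. Fix positive integers $m_1,\dots,m_n<q$; $M_i$ is the least positive integer with $M_i\equiv -m_iq^{-1}\pmod p$ (so $1\le M_i\le p-1$), and in formulas over $\mathbb{F}_p$ denotes its residue. $e_1,\dots,e_n$ is the standard basis of $\mathbb{F}_p^n$. With $\Phi_p(x,z)=\prod_{i=1}^n(x-z_i)^{M_i}$, for a positive integer $l$, $I^{[l]}(z)\in\mathbb{F}_p[z_1,\dots,z_n]^n$ is the coefficient of $x^{lp-1}$ in $\big(\Phi_p/(x-z_1),\dots,\Phi_p/(x-z_n)\big)$. $r=\lfloor (M_1+\dots+M_n)/p\rfloor$. Monomials $z_1^{d_1}\cdots z_n^{d_n}$ are ordered lexicographically by exponent vectors $(d_1,\dots,d_n)$ (so $z_1>z_2>\dots>z_n$);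 the $\mathrm{id}$-leading term of a nonzero $f\in\mathbb{F}_p[z]^n$ is $a\,z^d$ where $z^d$ is the largest monomial occurring in $f$ with nonzero coefficient $a\in\mathbb{F}_p^n$. For an integer $1\le x\le p$, $\Gamma_{\mathbb{F}_p}(x)$ is the residue of $(-1)^{x-1}(x-1)!$. *)

From HB Require Import structures.
From mathcomp Require Import all_boot all_order all_algebra.
From mathcomp Require Import multinomials.mpoly.
Set Implicit Arguments. Unset Strict Implicit. Unset Printing Implicit Defensive.
Import Order.TTheory GRing.Theory.
Local Open Scope ring_scope.

Fixpoint lexle (s t : seq nat) : bool :=
  match s, t with
  | x :: s', y :: t' => (x < y)%N || ((x == y) && lexle s' t')
  | _, _ => true
  end.

Definition mlexle (n : nat) (d e : 'X_{1..n}) : bool := lexle (tval (multinom_val d)) (tval (multinom_val e)).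

Definition GammaFp (p : nat) (x : nat) : 'F_p := (-1) ^+ x.-1 * (x.-1)`!%:R.

Definition Phi (p n : nat) (M : 'I_n -> nat) : {poly {mpoly 'F_p[n]}} :=
  \prod_(k < n) ('X - ('X_k)%:P) ^+ M k.

Definition Il (p n : nat) (M : 'I_n -> nat) (l : nat) : 'I_n -> {mpoly 'F_p[n]} :=
  fun k => ((Phi p M %/ ('X - ('X_k)%:P)) `_ (l * p).-1).

(* "The id-leading term of the nonzero f : F[z]^n is a z^d": z^d is the
   lex-largest monomial occurring (with nonzero coefficient vector) in f,
   and a is the coefficient vector of z^d. *)
Definition is_id_leading_term (R : nzRingType) (n : nat) (f : 'I_n -> {mpoly R[n]})
    (a : 'I_n -> R) (d : 'X_{1..n}) : Prop :=
  (exists k, (f k)@_d != 0) /\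
  (forall k (e : 'X_{1..n}), e \in msupp (f k) -> mlexle e d) /\
  (forall k, (f k)@_d = a k).

(* Dividing Phi_p by x - z_k lowers the k-th exponent by one, so I^[l]_k is the
   coefficient of x^(lp-1) in prod_j (x - z_j)^(N_j) with N_j = M_j - [j = k].
   Expanding the product, its monomials are the z^e with e <= N and
   |e| = |M| - lp, with coefficient prod_j (-1)^(e_j) C(N_j, e_j).  The
   lex-largest such e saturates z_1, ..., z_(i-1) and puts the remaining degree
   u = sum_(j >= i) M_j - lp < M_i on z_i; its coefficient, zero for k < i and
   (-1)^(|e|) C(M_i - [k = i], u) otherwise, takes the stated Gamma form by
   Gamma(x+1) = (-1)^x x! and the reflection formula
   Gamma(p - v + 1) Gamma(v) = (-1)^v (Wilson's theorem), with v = M_i - u. *)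

From HB Require Import structures.
From mathcomp Require Import all_boot all_order all_algebra.
From mathcomp Require Import multinomials.mpoly.
From mathcomp Require Import ring zify.

Set Implicit Arguments.
Unset Strict Implicit.
Unset Printing Implicit Defensive.

Import Order.TTheory GRing.Theory.
Local Open Scope ring_scope.

Lemma exprXsubC_ord (R : comNzRingType) (x : R) (k b : nat) : (k < b)%N ->
  ('X - x%:P) ^+ k =
  \sum_(a < b) ((-1) ^+ a * 'C(k, a)%:R * x ^+ a)%:P * 'X^(k - a).
Proof.
move=> kb; rewrite exprBn.
rewrite (big_ord_widen b (fun a => (-1) ^+ a * 'X ^+ (k - a) * x%:P ^+ a *+ 'C(k, a)) kb).
rewrite big_mkcond /=.
apply: eq_bigr => a _; case: ltnP => [_|ka].
  by rewrite -mulr_natr !rmorphM /= !rmorphXn rmorphN1 rmorph_nat; ring.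
by rewrite bin_small // mulr0n mulr0 mul0r rmorph0 mul0r.
Qed.

Lemma prod_exprXsubC_ffun (R : comNzRingType) (I : finType) (c : I -> R)
    (N : I -> nat) (b : nat) : (forall j, N j < b)%N ->
  \prod_j ('X - (c j)%:P) ^+ N j =
  \sum_(f : {ffun I -> 'I_b})
    (\prod_j ((-1) ^+ f j * 'C(N j, f j)%:R * c j ^+ f j))%:P
    * 'X^(\sum_j (N j - f j)).
Proof.
move=> Nb; under eq_bigr => j _ do rewrite (exprXsubC_ord (c j) (Nb j)).
rewrite bigA_distr_bigA; apply: eq_bigr => f _.
by rewrite big_split /= prodrXr rmorph_prod.
Qed.

Lemma mcoeff_prod_exprXsubX (R : comNzRingType) (n : nat) (N : 'I_n -> nat)
    (t : nat) (e : 'X_{1..n}) :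
  ((\prod_(j < n) ('X - ('X_j : {mpoly R[n]})%:P) ^+ N j)`_t)@_e =
  ((\sum_j (N j - e j))%N == t)%:R * \prod_j ((-1) ^+ e j * 'C(N j, e j)%:R).
Proof.
pose b := (\max_j N j).+1; have Nb j : (N j < b)%N by rewrite ltnS leq_bigmax.
pose sb (f : 'I_n -> nat) := \prod_j ((-1) ^+ f j * 'C(N j, f j)%:R : R).
have termE (f : {ffun 'I_n -> 'I_b}) :
    (((\prod_j ((-1) ^+ f j * 'C(N j, f j)%:R * ('X_j : {mpoly R[n]}) ^+ f j))%:P
      * 'X^(\sum_j (N j - f j)))`_t)@_e =
    ((\sum_j (N j - f j))%N == t)%:R * sb (fun j => f j)
      * ([multinom (f j : nat) | j < n] == e)%:R.
  rewrite coefMXn; case: ltnP => [tlt|tge].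
    by rewrite mcoeff0 eq_sym (ltn_eqF tlt) !mul0r.
  rewrite coefC subn_eq0.
  have -> : (t <= \sum_j (N j - f j))%N = ((\sum_j (N j - f j))%N == t).
    by rewrite eqn_leq tge.
  case: eqP => _; last by rewrite mcoeff0 !mul0r.
  rewrite mul1r big_split /=.
  have -> : \prod_j ((-1) ^+ f j * 'C(N j, f j)%:R : {mpoly R[n]})
            = (sb (fun j => f j))%:MP.
    rewrite rmorph_prod; apply: eq_bigr => j _.
    by rewrite rmorphM rmorphXn rmorphN1 rmorph_nat.
  rewrite (eq_bigr (fun j => 'X_j ^+ [multinom (f j : nat) | j < n] j)).
    by rewrite -mpolyXE_id mcoeffCM mcoeffX.
  by move=> j _; rewrite mnmE.
rewrite (prod_exprXsubC_ffun _ Nb) coef_sum raddf_sum /=.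
under eq_bigr do rewrite termE.
have [e_lt|/forallPn[j]] := boolP [forall j, e j < b]%N; last first.
  rewrite -leqNgt => bej.
  rewrite [X in _ * X](bigD1 j) //= bin_small ?(leq_trans (Nb j)) //.
  rewrite mulr0n !(mulr0, mul0r) big1 // => f _.
  case: (@eqP _ _ e) => [fe|_]; last by rewrite mulr0n mulr0.
  by move: bej; rewrite -fe mnmE leqNgt ltn_ord.
pose f0 : {ffun 'I_n -> 'I_b} := [ffun j => Ordinal (forallP e_lt j)].
have f0E : [multinom (f0 j : nat) | j < n] = e by apply/mnmP => j; rewrite !mnmE ffunE.
rewrite (bigD1 f0) //= f0E eqxx mulr1 [X in _ + X]big1 ?addr0.
  by congr (((_ == _)%:R) * _); apply: eq_bigr => j _; rewrite ffunE.
move=> f /eqP f0f; case: (@eqP _ _ e) => [fe|_]; last by rewrite mulr0n mulr0.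
case: f0f; apply/ffunP => j; apply: val_inj.
by rewrite ffunE /= -fe mnmE.
Qed.

Lemma mcoeff_prod_exprXsubX_neq0 (R : comNzRingType) (n : nat) (N : 'I_n -> nat)
    (t : nat) (e : 'X_{1..n}) :
  ((\prod_(j < n) ('X - ('X_j : {mpoly R[n]})%:P) ^+ N j)`_t)@_e != 0 ->
  (forall j, e j <= N j)%N /\ (\sum_j (N j - e j))%N = t.
Proof.
rewrite mcoeff_prod_exprXsubX.
have [sum_t|_] := eqVneq (\sum_j (N j - e j))%N t; last by rewrite mul0r eqxx.
rewrite mul1r => nz; split=> // j; rewrite leqNgt; apply/negP => lt_Ne.
by move: nz; rewrite (bigD1 j) //= bin_small // mulr0n mulr0 mul0r eqxx.
Qed.

Lemma divp_prod_exprXsubC (R : idomainType) (I : finType) (c : I -> R)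
    (N : I -> nat) (k : I) : (0 < N k)%N ->
  (\prod_j ('X - (c j)%:P) ^+ N j) %/ ('X - (c k)%:P) =
  \prod_j ('X - (c j)%:P) ^+ (N j - (j == k)).
Proof.
move=> Nk_gt0; rewrite (bigD1 k) // [in RHS](bigD1 k) //= eqxx subn1.
rewrite -[in LHS](prednK Nk_gt0) exprS -mulrA Pdiv.IdomainMonic.mulKp ?monicXsubC //.
congr (_ * _); by apply: eq_bigr => j /negbTE ->; rewrite subn0.
Qed.

Lemma lexle_first_diff (s t : seq nat) : size s = size t ->
  (forall j, (forall k, k < j -> nth 0 s k = nth 0 t k) -> nth 0 s j <= nth 0 t j)%N ->
  lexle s t.
Proof.
elim: s t => [|x s IHs] [|y t] //= [size_st] first_diff.
have le_xy : (x <= y)%N by apply: (first_diff 0%N).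
rewrite ltn_neqAle le_xy andbT; case: eqP => //= eq_xy.
by apply: IHs => // j prefix; apply: (first_diff j.+1) => -[|k] //= /prefix.
Qed.

Lemma mlexle_first_diff (n : nat) (e d : 'X_{1..n}) :
  (forall j : 'I_n, (forall k : 'I_n, k < j -> e k = d k) -> e j <= d j)%N ->
  mlexle e d.
Proof.
move=> first_diff; apply: lexle_first_diff; first by rewrite !size_tuple.
move=> j prefix; have [jn|nj] := ltnP j n; last by rewrite !nth_default ?size_tuple.
have := first_diff (Ordinal jn); rewrite !mnm_tnth !(tnth_nth 0%N); apply=> k kj.
by rewrite !mnm_tnth !(tnth_nth 0%N) prefix.
Qed.

Lemma sumn_ord_ge (n : nat) (F : 'I_n -> nat) (i : 'I_n) :
  (\sum_(j < n | i <= j) F j = F i + \sum_(j < n | i < j) F j)%N.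
Proof.
rewrite (bigD1 i) //=; congr addn.
by apply: eq_bigl => j; rewrite ltn_neqAle andbC eq_sym.
Qed.

Lemma sumn_ord_le (n : nat) (F : 'I_n -> nat) (i : 'I_n) :
  (\sum_(j < n | j <= i) F j = \sum_(j < n | j < i) F j + F i)%N.
Proof.
rewrite (bigD1 i) //= addnC; congr addn.
by apply: eq_bigl => j; rewrite ltn_neqAle andbC.
Qed.

Lemma sumn_ord_split (n : nat) (F : 'I_n -> nat) (i : 'I_n) :
  (\sum_j F j = \sum_(j < n | j < i) F j + F i + \sum_(j < n | i < j) F j)%N.
Proof.
rewrite (bigID (fun j : 'I_n => (j < i)%N)) /= -addnA -sumn_ord_ge; congr addn.
by apply: eq_bigl => j; rewrite -leqNgt.
Qed.

Definition lexmax_mnm (n : nat) (M : 'I_n -> nat) (i : 'I_n) (u : nat) : 'X_{1..n} :=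
  [multinom (if (j < i)%N then M j else if j == i then u else 0%N) | j < n].

Section LexMax.

Variables (n : nat) (M : 'I_n -> nat) (i : 'I_n) (u : nat).
Local Notation d := (lexmax_mnm M i u).

Lemma lexmax_mnmE (j : 'I_n) :
  d j = if (j < i)%N then M j else if j == i then u else 0%N.
Proof. exact: mnmE. Qed.

Lemma lexmax_mnm_tail (j : 'I_n) : (i < j)%N -> d j = 0%N.
Proof.
move=> ij; rewrite lexmax_mnmE ltnNge (ltnW ij) ifN //.
by apply: contraTneq ij => ->; rewrite ltnn.
Qed.

Lemma sum_lexmax_mnm : (\sum_j d j = \sum_(j < n | j < i) M j + u)%N.
Proof.
rewrite (sumn_ord_split _ i) [X in (_ + X)%N]big1 => [|j /lexmax_mnm_tail //].
rewrite lexmax_mnmE ltnn eqxx addn0; congr (_ + _)%N.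
by apply: eq_bigr => j ji; rewrite lexmax_mnmE ji.
Qed.

Lemma mlexle_lexmax_mnm (e : 'X_{1..n}) :
  (forall j, e j <= M j)%N -> (\sum_j e j = \sum_(j < n | j < i) M j + u)%N ->
  mlexle e d.
Proof.
move=> le_eM sum_e; apply: mlexle_first_diff => j prefix.
have [ji|ij] := ltnP j i; first by rewrite lexmax_mnmE ji.
have tail_d : (\sum_(k < n | j < k) d k = 0)%N.
  by apply: big1 => k jk; rewrite lexmax_mnm_tail // (leq_ltn_trans ij jk).
have prefix_sum : (\sum_(k < n | k < j) e k = \sum_(k < n | k < j) d k)%N.
  exact: eq_bigr.
move: (sumn_ord_split e j) (sumn_ord_split d j) sum_lexmax_mnm.
by rewrite tail_d prefix_sum; lia.
Qed.

End LexMax.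

Lemma GammaFp_binom (p u v : nat) : (0 < v)%N ->
  GammaFp p (u + v).+1 = - (v * 'C(u + v, u))%:R * GammaFp p u.+1 * GammaFp p v.
Proof.
case: v => [//|v] _; rewrite /GammaFp /= -{1}(bin_fact (leq_addr v.+1 u)) addKn factS.
rewrite !natrM addnS exprS exprD; ring.
Qed.

Section PrimeField.

Variable p : nat.
Hypothesis p_prime : prime p.

Lemma natr_Fp_neq0 (k : nat) : (0 < k < p)%N -> (k%:R : 'F_p) != 0.
Proof.
by case/andP=> k_gt0 kp; rewrite -(dvdn_pcharf (pchar_Fp p_prime)) gtnNdvd.
Qed.

Lemma fact_Fp_neq0 (k : nat) : (k < p)%N -> (k`!%:R : 'F_p) != 0.
Proof.
elim: k => [|k IHk] kp; first by rewrite oner_neq0.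
rewrite factS natrM mulf_neq0 //; first exact: natr_Fp_neq0.
exact: IHk (ltnW kp).
Qed.

Lemma binomial_Fp_neq0 (m k : nat) : (k <= m < p)%N -> ('C(m, k)%:R : 'F_p) != 0.
Proof.
case/andP=> km mp; apply: contraTneq (fact_Fp_neq0 mp) => C0.
by rewrite -(bin_fact km) !natrM C0 !mul0r.
Qed.

Lemma GammaFp_neq0 (x : nat) : (0 < x <= p)%N -> GammaFp p x != 0.
Proof.
by case/andP=> x_gt0 xp; rewrite mulf_neq0 ?signr_eq0 ?fact_Fp_neq0 // prednK.
Qed.

Lemma least_natr_Fp_lt (a : 'F_p) (M : nat) : a != 0 -> M%:R = a ->
  (forall t : nat, (0 < t)%N -> t%:R = a -> (M <= t)%N) -> (M < p)%N.
Proof.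
move=> a_neq0 Ma M_least; have modE : (M %% p)%:R = a by rewrite Fp_nat_mod.
have mod_gt0 : (0 < M %% p)%N.
  by rewrite lt0n; apply: contraNneq a_neq0 => mod0; rewrite -modE mod0.
exact: leq_ltn_trans (M_least _ mod_gt0 modE) (ltn_pmod _ (prime_gt0 p_prime)).
Qed.

Lemma sign_pred_Fp : (-1) ^+ p.-1 = 1 :> 'F_p.
Proof.
case: (even_prime p_prime) => [p2|p_odd]; last first.
  by move: p_odd; rewrite -signr_odd -(prednK (prime_gt0 p_prime)) /= => /negbTE ->.
have -> : p.-1 = 1%N by rewrite p2.
by apply/eqP; rewrite expr1 -subr_eq0 -opprD -mulr2n oppr_eq0 -p2 pchar_Fp_0.
Qed.

Lemma fact_reflect_Fp (v : nat) : (0 < v <= p)%N ->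
  ((p - v)`!%:R * (v.-1)`!%:R : 'F_p) = (-1) ^+ v.
Proof.
elim: v => [//|[|v] IHv] /andP[_ vp].
  have := Wilson (prime_gt1 p_prime); rewrite p_prime (dvdn_pcharf (pchar_Fp p_prime)).
  by rewrite subn1 mulr1 mulrSr expr1 addr_eq0 => /esym/eqP.
have := IHv (ltnW vp); rewrite -[(p - v.+1)%N](subnSK vp) factS natrM (subnSK vp).
rewrite natrB ?(ltnW vp) // pchar_Fp_0 // sub0r => IH.
by rewrite exprS -IH factS natrM /=; ring.
Qed.

Lemma GammaFp_reflect (v : nat) : (0 < v <= p)%N ->
  GammaFp p (p - v).+1 * GammaFp p v = (-1) ^+ v.
Proof.
move=> vp; rewrite /GammaFp /= mulrACA -exprD fact_reflect_Fp //.
have -> : (p - v + v.-1 = p.-1)%N by rewrite -!subn1; lia.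
by rewrite sign_pred_Fp mul1r.
Qed.

Lemma GammaFp_ratio (u v : nat) (b : bool) : (0 < v)%N -> (u + v < p)%N ->
  GammaFp p (u + v).+1 * GammaFp p (p - v).+1 / GammaFp p u.+1
    * (b%:R / - v%:R - (~~ b)%:R / (u + v)%:R)
  = (-1) ^+ v * 'C(u + v - ~~ b, u)%:R.
Proof.
move=> v_gt0 uvp.
have Gu : GammaFp p u.+1 != 0 by apply: GammaFp_neq0; lia.
have Gv : GammaFp p v != 0 by apply: GammaFp_neq0; lia.
have v_neq0 : v%:R != 0 :> 'F_p by apply: natr_Fp_neq0; lia.
have uv_neq0 : (u + v)%:R != 0 :> 'F_p by apply: natr_Fp_neq0; lia.
rewrite GammaFp_binom // -[GammaFp p (p - v).+1](mulfK Gv) GammaFp_reflect; last by lia.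
have field_side : [&& (u + v)%:R != 0 :> 'F_p, - v%:R != 0 :> 'F_p,
                      GammaFp p u.+1 != 0 & GammaFp p v != 0].
  by rewrite oppr_eq0 uv_neq0 v_neq0 Gu Gv.
case: b => /=; rewrite ?subn0 ?subn1.
  by rewrite natrM; field; rewrite -natrD.
have -> : (v * 'C(u + v, u))%N = ((u + v) * 'C((u + v).-1, u))%N.
  by rewrite mul_bin_down addKn.
by rewrite natrM; field; rewrite -natrD.
Qed.

End PrimeField.

Section LeadingTerm.

Variables (p n : nat) (M : 'I_n -> nat) (l : nat) (i : 'I_n).
Hypotheses (p_prime : prime p) (M_gt0 : forall k, (0 < M k)%N)
  (M_lt_p : forall k, (M k < p)%N) (l_gt0 : (0 < l)%N).
Hypothesis i_def : (l * p <= \sum_(j < n | i <= j) M j < l * p + M i)%N.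

Local Notation A := (\sum_(j < n | (j < i)%N) M j)%N.
Local Notation S_i := (\sum_(j < n | (i <= j)%N) M j)%N.
Local Notation S_i1 := (\sum_(j < n | (i < j)%N) M j)%N.
Local Notation u := (S_i - l * p)%N.
Local Notation d := (lexmax_mnm M i u).

Lemma Il_prod (k : 'I_n) :
  Il p M l k = (\prod_(j < n) ('X - ('X_j)%:P) ^+ (M j - (j == k)))`_(l * p).-1.
Proof. by rewrite /Il /Phi divp_prod_exprXsubC. Qed.

Lemma sum_Il_exponents (k : 'I_n) :
  (\sum_j (M j - (j == k)) = A + u + (l * p).-1)%N.
Proof.
have lp_gt0 : (0 < l * p)%N by rewrite muln_gt0 l_gt0 prime_gt0.
have : (\sum_j M j = \sum_j (M j - (j == k)) + 1)%N.
  rewrite (bigD1 k) // [in RHS](bigD1 k) //= eqxx.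
  rewrite [X in _ = (_ + X + _)%N](eq_bigr M) => [|j /negbTE ->]; last by rewrite subn0.
  by have := M_gt0 k; lia.
have /andP[lp_le _] := i_def.
by rewrite (sumn_ord_split _ i); have := sumn_ord_ge M i; lia.
Qed.

Lemma msupp_Il_mlexle (k : 'I_n) (e : 'X_{1..n}) :
  e \in msupp (Il p M l k) -> mlexle e d.
Proof.
rewrite mcoeff_msupp Il_prod => /mcoeff_prod_exprXsubX_neq0[le_eN sum_eN].
apply: mlexle_lexmax_mnm => [j|]; first exact: leq_trans (le_eN j) (leq_subr _ _).
have le_sum : (\sum_j e j <= \sum_j (M j - (j == k)))%N by apply: leq_sum => j _.
rewrite sumnB // in sum_eN.
by rewrite -(subKn le_sum) sum_eN sum_Il_exponents addnK.
Qed.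

Lemma mcoeff_Il_lexmax (k : 'I_n) :
  (Il p M l k)@_d = if (k < i)%N then 0 else (-1) ^+ (A + u) * 'C(M i - (k == i), u)%:R.
Proof.
have /andP[_ u_lt_Mi] := i_def.
rewrite Il_prod mcoeff_prod_exprXsubX; case: ltnP => [ki|ik].
  rewrite [X in _ * X](bigD1 k) //= lexmax_mnmE ki eqxx bin_small.
    by rewrite mulr0n mulr0 mul0r mulr0.
  by rewrite subn1 ltn_predL.
have le_dN j : (d j <= M j - (j == k))%N.
  rewrite lexmax_mnmE; case: ltnP => [ji|ij].
    suff /negbTE-> : j != k by rewrite subn0.
    by apply: contraTneq ji => ->; rewrite -leqNgt.
  by case: eqP => [->|_] //; rewrite eq_sym; lia.
rewrite sumnB // sum_Il_exponents sum_lexmax_mnm addKn eqxx mul1r.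
rewrite big_split /= prodrXr sum_lexmax_mnm [X in _ * X](bigD1 i) //=.
rewrite lexmax_mnmE ltnn eqxx eq_sym.
rewrite [X in _ * (_ * X)]big1 ?mulr1 // => j ji; rewrite lexmax_mnmE.
case: ltnP => [ji'|ij]; last by rewrite (negbTE ji) bin0.
suff /negbTE-> : j != k by rewrite subn0 binn.
by apply: contraTneq ji' => ->; rewrite -leqNgt.
Qed.

Lemma Il_lead_coef_GammaFp (k : 'I_n) : (i <= k)%N ->
  (-1) ^+ (\sum_(j < n | (j <= i)%N) M j)%N
    * (GammaFp p (M i).+1 * GammaFp p (S_i1 - l.-1 * p).+1 / GammaFp p u.+1)
    * ((i < k)%N%:R / S_i1%:R - (k == i)%:R / (M i)%:R)
  = (-1) ^+ (A + u) * 'C(M i - (k == i), u)%:R.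
Proof.
move=> ik; have /andP[lp_le u_lt_Mi] := i_def.
have lpE : (l * p = l.-1 * p + p)%N by rewrite -{1}(prednK l_gt0) mulSn addnC.
have S_iE := sumn_ord_ge M i.
set v := (M i - u)%N; have MiE : M i = (u + v)%N by rewrite subnKC //; lia.
have v_gt0 : (0 < v)%N by rewrite subn_gt0; lia.
have S_i1_lp : (S_i1 + v = l * p)%N by lia.
have -> : (S_i1 - l.-1 * p = p - v)%N by lia.
have -> : (S_i1%:R : 'F_p) = - v%:R.
  by apply/eqP; rewrite -subr_eq0 opprK -natrD S_i1_lp natrM pchar_Fp_0 // mulr0.
have -> : (k == i) = ~~ (i < k)%N by rewrite ltn_neqAle ik andbT negbK eq_sym.
rewrite sumn_ord_le MiE -mulrA GammaFp_ratio -?MiE ?M_lt_p //.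
rewrite mulrA -exprD (_ : A + M i + v = A + u + v * 2)%N; last by lia.
by rewrite exprD exprM exprAC sqrrN !expr1n mulr1.
Qed.

End LeadingTerm.

Theorem theorem6p1 (p q n : nat) (m M : 'I_n -> nat) (l : nat) (i : 'I_n) :
  prime p -> prime q -> (2 <= n)%N -> (n < p)%N -> (q < p)%N ->
  (forall k, 0 < m k < q)%N ->
  (* M_k is the least positive integer with M_k = - m_k q^{-1} mod p *)
  (forall k, (0 < M k)%N /\ ((M k)%:R = - (m k)%:R / q%:R :> 'F_p) /\
     (forall t : nat, (0 < t)%N -> (t%:R = - (m k)%:R / q%:R :> 'F_p) -> (M k <= t)%N)) ->
  (1 <= l <= (\sum_(k < n) M k) %/ p)%N ->
  (* i = i(l): 0 <= sum_{j >= i} M_j - l p < M_i *)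
  (l * p <= \sum_(j < n | (i <= j)%N) M j < l * p + M i)%N ->
  let S_i := (\sum_(j < n | (i <= j)%N) M j)%N in
  let S_i1 := (\sum_(j < n | (i < j)%N) M j)%N in
  is_id_leading_term (Il p M l)
    (fun k : 'I_n =>
       (-1) ^+ (\sum_(j < n | (j <= i)%N) M j)%N
       * (GammaFp p (M i).+1 * GammaFp p (S_i1 - (l.-1) * p).+1
          / GammaFp p (S_i - l * p).+1)
       * ((i < k)%N%:R / S_i1%:R - (k == i)%:R / (M i)%:R))
    [multinom (if (j < i)%N then M j else if j == i then (S_i - l * p)%N else 0%N) | j < n].
Proof.
move=> p_prime q_prime _ _ q_lt_p m_bounds M_least /andP[l_gt0 _] i_def S_i S_i1.
have M_gt0 k : (0 < M k)%N by case: (M_least k).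
have M_lt_p k : (M k < p)%N.
  have [_ [Mk_eq Mk_least]] := M_least k; apply: least_natr_Fp_lt Mk_eq Mk_least => //.
  have /andP[m_gt0 m_lt_q] := m_bounds k.
  rewrite mulf_neq0 ?oppr_eq0 ?invr_eq0 ?natr_Fp_neq0 ?m_gt0 ?prime_gt0 //.
  exact: ltn_trans m_lt_q q_lt_p.
have /andP[_ u_lt_Mi] := i_def.
split; [|split].
- exists i; rewrite mcoeff_Il_lexmax // ltnn eqxx mulf_neq0 ?signr_eq0 //.
  by apply: binomial_Fp_neq0 => //; rewrite (leq_ltn_trans (leq_subr _ _) (M_lt_p i)); lia.
- exact: msupp_Il_mlexle.
- move=> k; rewrite mcoeff_Il_lexmax //; case: ltnP => [ki|ik].
    have /negbTE-> : k != i by apply: contraTneq ki => ->; rewrite ltnn.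
    by rewrite ltnNge (ltnW ki) !mul0r subrr mulr0.
  by rewrite Il_lead_coef_GammaFp.
Qed.
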